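(* Let $(\mathcal{X},d)$ be a finite metric space, $P$ a probability distribution on $\mathcal{X}$, $k\ge1$ an integer, and $O\in\mathcal{X}_k$ an optimal $k$-RP solution. Then there exists a $k$-multiset $S$ that is returned with positive probability by the variance-reduced distribution $\widetilde{P}_k$ such that $\mathbb{E}_{X\sim P_k}[d_k(S,X)]\le 4\cdot \mathbb{E}_{X\sim P_k}[d_k(O,X)]$.
   Context: $\mathcal{X}_k$ is the set of multisets of exactly $k$ points of $\mathcal{X}$. For $U,V\in\mathcal{X}_k$, $d_k(U,V)$ is the minimum, over perfect matchings between the $k$ elements of $U$ and the $k$ elements of $V$ (with multiplicity), of the sum of the distances of matched pairs. $P_k$ is the distribution of the multiset of $k$ points drawn i.i.d. from $P$. The $k$-RP cost of $S$ is $\mathbb{E}_{X\sim P_k}[d_k(S,X)]$, and $O$ minimizes it. The distribution $\widetilde{P}_k$ on $\mathcal{X}_k$: for each $x\in\mathcal{X}$ the multiset contains $\lfloor P(x)k\rfloor$ copies of $x$; each of the remaining $r=k-\sum_{x}\lfloor P(x)k\rfloor$ points (if $r>0$) is chosen independently, equal to $x$ with probability $\frac{P(x)-\lfloor P(x)k\rfloor/k}{\sum_{y\in\mathcal{X}}(P(y)-\lfloor P(y)k\rfloor/k)}$. *)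

From HB Require Import structures.
From mathcomp Require Import all_boot all_order all_algebra.
From mathcomp Require Import perm.
From mathcomp Require Import all_reals.
Set Implicit Arguments. Unset Strict Implicit. Unset Printing Implicit Defensive.
Import Order.TTheory GRing.Theory Num.Theory.
Local Open Scope ring_scope.

(* A k-multiset of points of T is represented by a k-tuple (an ordered listing
   of its elements with multiplicity); all quantities below are invariant under
   reordering of the tuple. *)

Definition is_metric (T : finType) (R : realType) (d : T -> T -> R) : Prop :=
  [/\ forall x y, 0 <= d x y,
      forall x y, d x y = 0 <-> x = y,
      forall x y, d x y = d y x &
      forall x y z, d x z <= d x y + d y z].

Definition is_distr (T : finType) (R : realType) (P : T -> R) : Prop :=
  (forall x, 0 <= P x) /\ \sum_(x : T) P x = 1.

(* The identity permutation's cost is used as the seed of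
   the iterated min (it is itself one of the matchings). *)
Definition dk (T : finType) (R : realType) (d : T -> T -> R) (k : nat)
    (U V : k.-tuple T) : R :=
  \big[Order.min/(\sum_(i < k) d (tnth U i) (tnth V i))]_(s : 'S_k)
     \sum_(i < k) d (tnth U i) (tnth V (s i)).

Definition kRP_cost (T : finType) (R : realType) (d : T -> T -> R)
    (P : T -> R) (k : nat) (S : k.-tuple T) : R :=
  \sum_(X : k.-tuple T) (\prod_(i < k) P (tnth X i)) * dk d S X.

Definition fl (T : finType) (R : realType) (P : T -> R) (k : nat) (x : T) : nat :=
  Num.truncn (P x * k%:R).

(* deterministic part of the variance-reduced sample *)
Definition fixed_part (T : finType) (R : realType) (P : T -> R) (k : nat) : seq T :=
  flatten [seq nseq (fl P k x) x | x <- enum T].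

Definition rem_count (T : finType) (R : realType) (P : T -> R) (k : nat) : nat :=
  (k - size (fixed_part P k))%N.

(* distribution of each of the r remaining points *)
Definition resid (T : finType) (R : realType) (P : T -> R) (k : nat) (x : T) : R :=
  P x - (fl P k x)%:R / k%:R.

Definition resid_prob (T : finType) (R : realType) (P : T -> R) (k : nat) (x : T) : R :=
  resid P k x / \sum_(y : T) resid P k y.

Definition Ptilde (T : finType) (R : realType) (P : T -> R) (k : nat)
    (S : k.-tuple T) : R :=
  \sum_(e : (rem_count P k).-tuple T)
     (\prod_(j < rem_count P k) resid_prob P k (tnth e j)) *
     (perm_eq (fixed_part P k ++ e) S)%:R.

(* For a sample X, let s_X be an optimal matching of O with X and let q(i, y)
   be the probability that s_X matches the i-th point of O to y.  Then q is a
   fractional assignment of the k points of O in which every point y receives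
   mass P(y) k, and its cost sum q(i, y) d(O_i, y) is the k-RP cost of O.
   The assignments with row sums 1 and column sums between floor(P(y) k) and
   ceil(P(y) k) form an integral polytope: while some entry is fractional, the
   row constraints and the tight column constraints are fewer than the
   fractional entries, so one can move along a kernel direction, without
   increasing the cost, until an entry becomes integral or a column tight.
   The resulting integral assignment f has column counts between the floor and
   the ceiling, so f(O) is in the support of the variance-reduced distribution,
   and sum_i d(O_i, f(i)) <= cost(O).  By the triangle inequality
   cost(f(O)) <= sum_i d(O_i, f(i)) + cost(O) <= 2 cost(O). *)

From HB Require Import structures.
From mathcomp Require Import all_boot all_order all_algebra.
From mathcomp Require Import perm.
From mathcomp Require Import all_reals.
From mathcomp Require Import zify lra.
Set Implicit Arguments. Unset Strict Implicit. Unset Printing Implicit Defensive.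
Import Order.TTheory GRing.Theory Num.Theory.
Local Open Scope ring_scope.

(** * Integrality of bounded bipartite assignments *)

Section UnderdeterminedSystem.
Variables (F : fieldType) (J K : finType).

Lemma underdetermined_nontrivial_solution (E : {set J}) (c : K -> J -> F) :
  (#|K| < #|E|)%N ->
  exists v : J -> F, [/\ exists j, v j != 0, forall j, j \notin E -> v j = 0 &
                        forall a, \sum_j c a j * v j = 0].
Proof.
move=> ltKE.
have [j0 j0E] : exists j0, j0 \in E.
  by apply/set0Pn; rewrite -card_gt0 (leq_ltn_trans _ ltKE).
pose A : 'M[F]_(#|E|, #|K|) := \matrix_(i, a) c (enum_val a) (enum_val i).
have /rowV0Pn[u] : kermx A != 0.
  by rewrite -mxrank_eq0 mxrank_ker subn_eq0 -ltnNge (leq_ltn_trans (rank_leq_col A)).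
rewrite sub_kermx => /eqP uA /matrix0Pn[i0 [i u_i]].
pose v j := if j \in E then u 0 (enum_rank_in j0E j) else 0.
have sum_v G : \sum_j G j * v j = \sum_i u 0 i * G (enum_val i).
  rewrite (bigID (mem E)) /= [X in _ + X]big1 ?addr0 => [|j /negbTE jE]; last first.
    by rewrite /v jE mulr0.
  rewrite big_enum_val; apply: eq_bigr => i' _.
  by rewrite /v enum_valP enum_valK_in mulrC.
exists v; split.
- by exists (enum_val i); rewrite /v enum_valP enum_valK_in -(ord1 i0).
- by move=> j /negbTE jE; rewrite /v jE.
- move=> a; have := congr1 (fun M : 'rV_#|K| => M 0 (enum_rank a)) uA.
  rewrite sum_v !mxE; apply: eq_trans; apply: eq_bigr => i' _.
  by rewrite mxE enum_rankK.
Qed.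

End UnderdeterminedSystem.

Section RealIntervals.
Variable R : realFieldType.

Definition max_step (l u a b : R) := if 0 < b then (u - a) / b else (a - l) / - b.

Lemma max_step_gt0 (l u a b : R) : l < a < u -> b != 0 -> 0 < max_step l u a b.
Proof.
case/andP=> la au b0; rewrite /max_step; case: ifP => [b_gt0|/negbT b_le0].
  by rewrite divr_gt0 // subr_gt0.
by rewrite divr_gt0 ?subr_gt0 // oppr_gt0 lt_neqAle b0 leNgt.
Qed.

Lemma le_max_step (l u a b t : R) : l <= a <= u -> 0 <= t <= max_step l u a b ->
  l <= a + t * b <= u.
Proof.
rewrite /max_step => /andP[la au] /andP[t0]; have [b_lt0|b_gt0|->] := ltgtP b 0.
- rewrite ler_pdivlMr ?oppr_gt0 // => tb.
  by apply/andP; split; nra.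
- rewrite ler_pdivlMr // => tb.
  by apply/andP; split; nra.
- by rewrite mulr0 addr0 la au.
Qed.

Lemma max_step_boundary (l u a b : R) : b != 0 -> ~~ (l < a + max_step l u a b * b < u).
Proof.
move=> b0; rewrite /max_step; case: ifP => _.
  by rewrite divfK // addrC subrK ltxx andbF.
by rewrite invrN mulrN mulNr divfK // opprB addrC subrK ltxx.
Qed.

Lemma unit_itv_nfrac (x : R) : 0 <= x <= 1 -> ~~ (0 < x < 1) -> x = (x == 1)%:R.
Proof.
case/andP=> x0 x1; rewrite negb_and -!leNgt; have [//|x_neq1] := eqVneq x 1.
case/orP=> [x_le0|x_ge1]; first exact/le_anti/andP.
by case/eqP: x_neq1; apply/le_anti/andP.
Qed.

Lemma fractional_partner (J : finType) (g : J -> R) (n : nat) j0 :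
  (forall j, 0 <= g j <= 1) -> \sum_j g j = n%:R -> 0 < g j0 < 1 ->
  exists2 j, j != j0 & 0 < g j < 1.
Proof.
move=> g01 gn gj0; apply/exists_inP; apply: contraLR gj0 => /exists_inPn others.
pose m := (\sum_(j | j != j0) (g j == 1%R))%N.
have gj0E : g j0 = n%:R - m%:R.
  suff others_m : \sum_(j | j != j0) g j = m%:R.
    by rewrite -gn (bigD1 j0) //= others_m addrK.
  by rewrite natr_sum; apply: eq_bigr => j j_neq; apply/unit_itv_nfrac/others.
have [le_nm|lt_mn] := leqP n m.
  by rewrite gj0E subr_gt0 ltr_nat ltnNge le_nm.
by rewrite gj0E -natrB 1?ltnW // ltr0n -[1]/(1%:R) ltr_nat; lia.
Qed.

End RealIntervals.

Lemma sum_delta (R : pzSemiRingType) (T : finType) (a : T) (g : T -> R) :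
  \sum_y (a == y)%:R * g y = g a.
Proof.
rewrite (bigD1 a) //= eqxx mul1r big1 ?addr0 // => y y_neq.
by rewrite eq_sym (negbTE y_neq) mul0r.
Qed.

Section IntegralRounding.
Variables (R : realFieldType) (I T : finType) (w : I -> T -> R) (lo hi : T -> nat).
Implicit Types (q : I -> T -> R) (v : I * T -> R).

Definition colsum q y := \sum_i q i y.

Definition feasible q := [/\ forall i y, 0 <= q i y, forall i, \sum_y q i y = 1 &
  forall y, (lo y)%:R <= colsum q y <= (hi y)%:R].

Definition fractional q (e : I * T) := 0 < q e.1 e.2 < 1.

Definition slack q y := (lo y)%:R < colsum q y < (hi y)%:R.

Definition nonintegrality q :=
  (#|[set e | fractional q e]| + #|[set y | slack q y]|)%N.

Definition assign_cost q := \sum_i \sum_y q i y * w i y.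

Definition load (f : I -> T) y := (\sum_i (f i == y))%N.

Lemma feasible_unit_itv q i y : feasible q -> 0 <= q i y <= 1.
Proof.
case=> q_ge0 q_row _; rewrite q_ge0 -(q_row i) (bigD1 y) //= lerDl.
exact: sumr_ge0.
Qed.

Lemma integral_feasible q : feasible q -> (forall e, ~~ fractional q e) ->
  exists f : I -> T,
    (forall y, lo y <= load f y <= hi y)%N /\ \sum_i w i (f i) = assign_cost q.
Proof.
move=> Fq nfrac; have [q_ge0 q_row q_col] := Fq.
have q_bool i y : q i y = (q i y == 1)%:R.
  exact: unit_itv_nfrac (feasible_unit_itv i y Fq) (nfrac (i, y)).
have q_one i : exists y, q i y == 1.
  apply/existsP; apply: contraT => /existsPn q_neq1; move: (q_row i).
  rewrite big1 => [/eqP|y _]; first by rewrite eq_sym oner_eq0.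
  by rewrite q_bool (negbTE (q_neq1 y)).
pose f i := xchoose (q_one i).
have qE i y : q i y = (f i == y)%:R.
  have q_fi : q i (f i) = 1 by apply/eqP/(xchooseP (q_one i)).
  have [<-|y_neq] := eqVneq (f i) y; first by rewrite q_fi.
  have : \sum_(z | z != f i) q i z = 0.
    apply: (@addrI _ 1).
    by rewrite addr0 -[in RHS](q_row i) [RHS](bigD1 (f i)) //= q_fi.
  by move/psumr_eq0P => -> //; rewrite eq_sym.
exists f; split => [y|].
  have := q_col y; rewrite /colsum (eq_bigr _ (fun i _ => qE i y)) -natr_sum.
  by rewrite !ler_nat.
by apply: eq_bigr => i _; under eq_bigr do rewrite qE; rewrite sum_delta.
Qed.

Definition direction q v := [/\ forall e, ~~ fractional q e -> v e = 0,
  forall i, \sum_y v (i, y) = 0 & forall y, ~~ slack q y -> \sum_i v (i, y) = 0].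

Lemma directionN q v : direction q v -> direction q (fun e => - v e).
Proof.
case=> v_supp v_row v_col; split=> [e /v_supp->|i|y /v_col]; rewrite ?oppr0 //.
  by rewrite sumrN v_row oppr0.
by rewrite sumrN => ->; rewrite oppr0.
Qed.

Lemma card_fractional_by_rows q :
  #|[set e | fractional q e]| = (\sum_i #|[set y | fractional q (i, y)]|)%N.
Proof.
under [RHS]eq_bigr do rewrite -sum1_card big_mkcond.
by rewrite pair_bigA -sum1_card big_mkcond; apply: eq_bigr => -[i y] _; rewrite !inE.
Qed.

Lemma card_fractional_by_cols q :
  #|[set e | fractional q e]| = (\sum_y #|[set i | fractional q (i, y)]|)%N.
Proof.
rewrite card_fractional_by_rows.
under eq_bigr do rewrite -sum1_card big_mkcond.
rewrite exchange_big; apply: eq_bigr => y _.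
rewrite -sum1_card [RHS]big_mkcond; apply: eq_bigr => i _.
by rewrite !inE.
Qed.

Lemma fractional_row_card q i y : feasible q -> fractional q (i, y) ->
  (1 < #|[set y | fractional q (i, y)]|)%N.
Proof.
move=> Fq frac_iy; have [_ q_row _] := Fq.
have [y' y'_neq frac_iy'] :=
  fractional_partner (n := 1) (fun y => feasible_unit_itv i y Fq) (q_row i) frac_iy.
by apply/card_gt1P; exists y', y; rewrite !inE.
Qed.

Lemma fractional_col_card q i y : feasible q -> ~~ slack q y -> fractional q (i, y) ->
  (1 < #|[set i | fractional q (i, y)]|)%N.
Proof.
move=> Fq tight frac_iy; have [_ _ q_col] := Fq.
have [n col_n] : exists n, colsum q y = n%:R.
  move: tight (q_col y); rewrite /slack negb_and -!leNgt.
  by case/orP=> [col_le|col_ge] /andP[lo_le le_hi]; [exists (lo y)|exists (hi y)];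
    apply/le_anti/andP.
have [i' i'_neq frac_i'y] :=
  fractional_partner (fun i => feasible_unit_itv i y Fq) col_n frac_iy.
by apply/card_gt1P; exists i', i; rewrite !inE.
Qed.

Lemma sum_row_indicator v i : \sum_e (e.1 == i)%:R * v e = \sum_y v (i, y).
Proof.
rewrite (eq_bigr (fun e => (e.1 == i)%:R * v (e.1, e.2))) => [|[] //].
rewrite -(pair_bigA _ (fun i' y => (i' == i)%:R * v (i', y))).
rewrite (bigD1 i) //= [X in _ + X]big1.
  by rewrite addr0; under eq_bigr do rewrite eqxx mul1r.
by move=> i' /negbTE i'_neq; rewrite big1 // => y _; rewrite i'_neq mul0r.
Qed.

Lemma sum_col_indicator v y : \sum_e (e.2 == y)%:R * v e = \sum_i v (i, y).
Proof.
rewrite (eq_bigr (fun e => (e.2 == y)%:R * v (e.1, e.2))) => [|[] //].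
rewrite -(pair_bigA _ (fun i y' => (y' == y)%:R * v (i, y'))) exchange_big.
rewrite (bigD1 y) //= [X in _ + X]big1.
  by rewrite addr0; under eq_bigr do rewrite eqxx mul1r.
by move=> y' /negbTE y'_neq; rewrite big1 // => i _; rewrite y'_neq mul0r.
Qed.

Definition frac_rows q := [set i | [exists y, fractional q (i, y)]].
Definition frac_cols q := [set y | [exists i, fractional q (i, y)]].

Lemma card_constraints_lt q y0 : feasible q -> y0 \in frac_cols q ->
  (#|frac_rows q| + #|[set y in frac_cols q | ~~ slack q y] :\ y0|
     < #|[set e | fractional q e]|)%N.
Proof.
move=> Fq frac_y0; set Cols := _ :\ y0.
have card_rows : (2 * #|frac_rows q| <= #|[set e | fractional q e]|)%N.
  rewrite mulnC -sum_nat_const big_mkcond card_fractional_by_rows /=.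
  apply: leq_sum => i _; rewrite inE; case: existsP => // -[y frac_iy].
  exact: fractional_row_card Fq frac_iy.
have card_cols : (2 * #|Cols| < #|[set e | fractional q e]|)%N.
  have y0_Cols : y0 \notin Cols by rewrite !inE eqxx.
  rewrite card_fractional_by_cols [X in (_ < X)%N](bigID (mem (y0 |: Cols))) /=.
  apply: leq_trans (leq_addr _ _); rewrite big_setU1 //= addnC -addn1.
  rewrite mulnC -sum_nat_const; apply: leq_add.
    apply: leq_sum => y; rewrite !inE.
    case/and3P=> _ /existsP[i frac_iy] tight.
    exact: fractional_col_card Fq tight frac_iy.
  rewrite card_gt0; apply/set0Pn.
  by move: frac_y0; rewrite inE => /existsP[i frac_iy0]; exists i; rewrite inE.
by move: card_rows card_cols; lia.
Qed.

Lemma exists_direction q e0 : feasible q -> fractional q e0 ->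
  exists2 v, exists e, v e != 0 & direction q v.
Proof.
move=> Fq frac_e0.
(* The constraint of column y0 is dropped.  If some fractional column is slack,
   y0 is one and needs no constraint; otherwise the constraint of y0 follows from
   the others, since all row sums vanish and all other columns then balance. *)
pose y0 := odflt e0.2 [pick y | (y \in frac_cols q) && slack q y].
have frac_y0 : y0 \in frac_cols q.
  rewrite /y0; case: pickP => [y /andP[]//|_] /=.
  by rewrite inE; apply/existsP; exists e0.1.
pose Rows := frac_rows q; pose Cols := [set y in frac_cols q | ~~ slack q y] :\ y0.
pose c (a : {i | i \in Rows} + {y | y \in Cols}) (e : I * T) : R :=
  match a with inl i => (e.1 == val i)%:R | inr y => (e.2 == val y)%:R end.
have [|v [v_nz v_supp v_eq]] :=
  underdetermined_nontrivial_solution (E := [set e | fractional q e]) c.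
  rewrite card_sum !card_sig (eq_card (B := Rows)) // (eq_card (B := Cols)) //.
  exact: card_constraints_lt.
have v0 e : ~~ fractional q e -> v e = 0 by move=> nfrac; apply: v_supp; rewrite inE.
have v_row i : \sum_y v (i, y) = 0.
  have [iR|] := boolP (i \in Rows).
    by rewrite -sum_row_indicator; exact: (v_eq (inl (exist _ i iR))).
  by rewrite /Rows /frac_rows inE => /existsPn nfrac; rewrite big1 // => y _; apply: v0.
have v_col y : y != y0 -> (y \in frac_cols q -> ~~ slack q y) -> \sum_i v (i, y) = 0.
  move=> y_neq tight; have [fy|] := boolP (y \in frac_cols q).
    have yC : y \in Cols by rewrite in_setD1 y_neq in_set fy tight.
    by rewrite -sum_col_indicator; exact: (v_eq (inr (exist _ y yC))).
  by rewrite /frac_cols inE => /existsPn nfrac; rewrite big1 // => i _; apply: v0.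
exists v => //; split=> // y tight.
have [y_eq|y_neq] := eqVneq y y0; last exact: v_col.
rewrite {y}y_eq in tight *.
have all_tight y : y \in frac_cols q -> ~~ slack q y.
  move=> fy; apply: contraNN tight => sy; rewrite /y0.
  case: (pickP [pred y | (y \in frac_cols q) && slack q y]) => [y' /andP[] //|].
  by move/(_ y); rewrite /= fy sy.
have : \sum_y \sum_i v (i, y) = 0 by rewrite exchange_big big1.
rewrite (bigD1 y0) //= [X in _ + X]big1 ?addr0 // => y y_neq.
exact: v_col y_neq (all_tight y).
Qed.

Section Step.
Variables (q : I -> T -> R) (v : I * T -> R) (e1 : I * T).
Hypotheses (Fq : feasible q) (v_e1 : v e1 != 0) (dir_v : direction q v).

Let vcol y := \sum_i v (i, y).

Let critical (x : (I * T) + T) :=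
  match x with inl e => v e != 0 | inr y => slack q y && (vcol y != 0) end.

Let bound x := match x with
  | inl e => max_step 0 1 (q e.1 e.2) (v e)
  | inr y => max_step (lo y)%:R (hi y)%:R (colsum q y) (vcol y) end.

Let xm := Order.arg_min (inl e1) critical bound.
Let eps := bound xm.
Let q' i y := q i y + eps * v (i, y).

Let fractional_support e : v e != 0 -> fractional q e.
Proof. by case: dir_v => v_supp _ _; apply: contraR => /v_supp->. Qed.

Let eps_bound x : critical x -> 0 <= eps <= bound x.
Proof.
rewrite /eps /xm; case: arg_minP => // xm' crit_xm' min_xm' crit_x.
rewrite min_xm' // andbT ltW //.
case: xm' crit_xm' {min_xm'} => [e v_e|y /andP[sl vcol_y]] /=.
  exact: max_step_gt0 (fractional_support v_e) v_e.
exact: max_step_gt0.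
Qed.

Let colsum_step y : colsum q' y = colsum q y + eps * vcol y.
Proof. by rewrite /colsum big_split /= mulr_sumr. Qed.

Let vcol_tight y : ~~ slack q y -> vcol y = 0.
Proof. by case: dir_v => _ _; apply. Qed.

Let step_feasible : feasible q'.
Proof.
have [q_ge0 q_row q_col] := Fq; split=> [i y|i|y].
- have [v0|v_neq0] := eqVneq (v (i, y)) 0; first by rewrite /q' v0 mulr0 addr0.
  have eps_iy := eps_bound (x := inl (i, y)) v_neq0.
  by have /andP[] := le_max_step (feasible_unit_itv i y Fq) eps_iy.
- by case: dir_v => _ v_row _; rewrite big_split /= -mulr_sumr v_row mulr0 addr0 q_row.
- rewrite colsum_step; have [v0|v_neq0] := eqVneq (vcol y) 0.
    by rewrite v0 mulr0 addr0.
  have crit_y : critical (inr y).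
    by rewrite /= v_neq0 andbT; move: v_neq0; apply: contraNT => /vcol_tight ->.
  exact: le_max_step (q_col y) (eps_bound crit_y).
Qed.

Let step_nonintegrality : (nonintegrality q' < nonintegrality q)%N.
Proof.
have frac_sub : [set e | fractional q' e] \subset [set e | fractional q e].
  apply/subsetP => -[i y]; rewrite !inE.
  have [v0|v_neq0] := eqVneq (v (i, y)) 0; last by move=> _; exact: fractional_support.
  by rewrite /fractional /q' /= v0 mulr0 addr0.
have slack_sub : [set y | slack q' y] \subset [set y | slack q y].
  apply/subsetP => y; rewrite !inE; apply: contraTT => tight.
  by rewrite /slack colsum_step vcol_tight // mulr0 addr0.
have crit_xm : critical xm by rewrite /xm; case: arg_minP.
rewrite /nonintegrality; case xmE: xm crit_xm => [e|y] /= crit.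
  rewrite -addSn leq_add ?subset_leq_card //; apply: proper_card; apply/properP.
  split=> //; exists e; rewrite !inE; first exact: fractional_support.
  by rewrite /fractional /q' /eps xmE /= -surjective_pairing max_step_boundary.
rewrite -addnS leq_add ?subset_leq_card //; apply: proper_card; apply/properP.
split=> //; exists y; rewrite !inE; first by case/andP: crit.
by rewrite /slack colsum_step /eps xmE max_step_boundary //; case/andP: crit.
Qed.

Hypothesis v_cost : \sum_i \sum_y v (i, y) * w i y <= 0.

Let step_cost : assign_cost q' <= assign_cost q.
Proof.
have eps_ge0 : 0 <= eps by have /andP[] := eps_bound (x := inl e1) v_e1.
have -> : assign_cost q' = assign_cost q + eps * \sum_i \sum_y v (i, y) * w i y.
  rewrite /assign_cost mulr_sumr -big_split; apply: eq_bigr => i _.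
  by rewrite mulr_sumr -big_split; apply: eq_bigr => y _; rewrite /q' mulrDl mulrA.
by rewrite gerDl mulr_ge0_le0.
Qed.

Lemma descent_step : exists q', [/\ feasible q',
  (nonintegrality q' < nonintegrality q)%N & assign_cost q' <= assign_cost q].
Proof. by exists q'. Qed.

End Step.

Lemma exists_descent_step q : feasible q -> (exists e, fractional q e) ->
  exists q', [/\ feasible q',
    (nonintegrality q' < nonintegrality q)%N & assign_cost q' <= assign_cost q].
Proof.
move=> Fq [e0 frac_e0]; have [v [e1 v_e1] dir_v] := exists_direction Fq frac_e0.
have [v_cost|/ltW v_cost] := lerP (\sum_i \sum_y v (i, y) * w i y) 0.
  exact: descent_step v_e1 dir_v v_cost.
apply: (descent_step (v := fun e => - v e) (e1 := e1)) => //.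
- by rewrite oppr_eq0.
- exact: directionN.
- under eq_bigr do under eq_bigr do rewrite mulNr.
  by under eq_bigr do rewrite sumrN; rewrite sumrN oppr_le0.
Qed.

Lemma integral_rounding q : feasible q ->
  exists f : I -> T,
    (forall y, lo y <= load f y <= hi y)%N /\ \sum_i w i (f i) <= assign_cost q.
Proof.
have [n] := ubnP (nonintegrality q); elim: n q => [//|n IH] q lt_qn Fq.
have [/existsP frac|/existsPn nfrac] := boolP [exists e, fractional q e].
  have [q' [Fq' lt_q'q cost_q'q]] := exists_descent_step Fq frac.
  have [f [load_f cost_f]] := IH q' (leq_trans lt_q'q lt_qn) Fq'.
  by exists f; split=> //; apply: le_trans cost_f cost_q'q.
have [f [load_f cost_f]] := integral_feasible Fq nfrac.
by exists f; rewrite cost_f.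
Qed.

End IntegralRounding.

(** * The matching relaxation of the k-RP cost *)

Lemma sum_prod_tnth (R : comPzSemiRingType) (T : finType) k (g : 'I_k -> T -> R) :
  \sum_(X : k.-tuple T) \prod_(i < k) g i (tnth X i) = \prod_(i < k) \sum_x g i x.
Proof.
rewrite bigA_distr_bigA (reindex (fun X : k.-tuple T => [ffun i => tnth X i])) /=.
  by apply: eq_bigr => X _; apply: eq_bigr => i _; rewrite ffunE.
exists (fun f : {ffun 'I_k -> T} => [tuple f i | i < k]) => [X _|f _].
  by apply: eq_from_tnth => i; rewrite tnth_mktuple ffunE.
by apply/ffunP => i; rewrite ffunE tnth_mktuple.
Qed.

Section OptimalMatching.
Variables (R : realType) (T : finType) (d : T -> T -> R) (k : nat).

Definition opt_matching (U V : k.-tuple T) : 'S_k :=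
  Order.arg_min (1%g : 'S_k) xpredT
    (fun s : 'S_k => \sum_(i < k) d (tnth U i) (tnth V (s i))).

Lemma dk_opt_matching U V :
  dk d U V = \sum_(i < k) d (tnth U i) (tnth V (opt_matching U V i)).
Proof.
rewrite /opt_matching; case: arg_minP => // s _ s_min.
apply/le_anti; rewrite bigmin_le /=; apply/bigmin_geP.
split=> [|s' _]; last exact: s_min.
by have := s_min (1%g : 'S_k) isT; under [X in _ <= X -> _]eq_bigr do rewrite perm1.
Qed.

End OptimalMatching.

Definition cl (T : finType) (R : realType) (P : T -> R) (k : nat) (x : T) : nat :=
  if (fl P k x)%:R == P x * k%:R then fl P k x else (fl P k x).+1.

Lemma fl_cl_bounds (T : finType) (R : realType) (P : T -> R) (k : nat) (x : T) :
  0 <= P x -> (fl P k x)%:R <= P x * k%:R <= (cl P k x)%:R.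
Proof.
move=> Px_ge0; have /andP[fl_le lt_fl1] := truncn_itv (mulr_ge0 Px_ge0 (ler0n R k)).
by rewrite /cl /fl fl_le; case: eqP => [->|_] //=; apply: ltW.
Qed.

Section RelaxedMatching.
Variables (R : realType) (T : finType) (d : T -> T -> R) (P : T -> R) (k : nat).
Hypothesis P_distr : is_distr P.

Let pX (X : k.-tuple T) := \prod_(i < k) P (tnth X i).

Let pX_ge0 X : 0 <= pX X.
Proof. by apply: prodr_ge0 => i _; case: P_distr. Qed.

Let sum_pX : \sum_X pX X = 1.
Proof.
by rewrite /pX (sum_prod_tnth (fun _ => P)); case: P_distr => _ ->; rewrite big1.
Qed.

Let marginal j y : \sum_X pX X * (tnth X j == y)%:R = P y.
Proof.
pose g i x := P x * (if i == j then (x == y)%:R else 1).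
have -> : \sum_X pX X * (tnth X j == y)%:R = \sum_X \prod_(i < k) g i (tnth X i).
  by apply: eq_bigr => X _; rewrite /g big_split /= -big_mkcond big_pred1_eq.
rewrite sum_prod_tnth (bigD1 j) //= [Y in _ * Y]big1 ?mulr1 => [|i /negbTE i_neq].
  by rewrite /g eqxx; under eq_bigr do rewrite mulrC eq_sym; rewrite sum_delta.
by rewrite /g i_neq; under eq_bigr do rewrite mulr1; case: P_distr.
Qed.

Section Relaxation.
Variable O : k.-tuple T.

Let q i y := \sum_X pX X * (tnth X (opt_matching d O X i) == y)%:R.

Let q_feasible : feasible (fl P k) (cl P k) q.
Proof.
split=> [i y|i|y].
- by apply: sumr_ge0 => X _; rewrite mulr_ge0 ?pX_ge0.
- rewrite /q exchange_big /= -[RHS]sum_pX; apply: eq_bigr => X _.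
  rewrite -mulr_sumr -[RHS]mulr1; congr (_ * _).
  by under eq_bigr do rewrite -[_%:R]mulr1; rewrite sum_delta.
have -> : colsum q y = P y * k%:R.
  rewrite /colsum /q exchange_big /=.
  have -> : \sum_X \sum_i pX X * (tnth X (opt_matching d O X i) == y)%:R =
            \sum_X \sum_(j < k) pX X * (tnth X j == y)%:R.
    apply: eq_bigr => X _.
    by rewrite [RHS](reindex_inj (@perm_inj _ (opt_matching d O X))).
  rewrite exchange_big /=; under eq_bigr do rewrite marginal.
  by rewrite sumr_const card_ord mulr_natr.
by apply: fl_cl_bounds; case: P_distr.
Qed.

Let q_cost : assign_cost (fun i y => d (tnth O i) y) q = kRP_cost d P O.
Proof.
rewrite /assign_cost /q /kRP_cost.
under eq_bigr do under eq_bigr do rewrite mulr_suml.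
under eq_bigr do rewrite exchange_big /=.
rewrite exchange_big /=; apply: eq_bigr => X _.
rewrite dk_opt_matching mulr_sumr; apply: eq_bigr => i _.
by under eq_bigr do rewrite -mulrA; rewrite -mulr_sumr sum_delta.
Qed.

Lemma exists_rounded_matching : exists f : 'I_k -> T,
  (forall y, fl P k y <= load f y <= cl P k y)%N /\
  \sum_(i < k) d (tnth O i) (f i) <= kRP_cost d P O.
Proof.
by rewrite -q_cost; apply: (integral_rounding (fun i y => d (tnth O i) y) q_feasible).
Qed.

End Relaxation.

Hypothesis d_metric : is_metric d.

Lemma kRP_cost_ge0 (S : k.-tuple T) : 0 <= kRP_cost d P S.
Proof.
apply: sumr_ge0 => X _; rewrite mulr_ge0 ?pX_ge0 // dk_opt_matching.
by apply: sumr_ge0 => i _; case: d_metric.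
Qed.

Lemma kRP_cost_triangle (S O : k.-tuple T) :
  kRP_cost d P S <= \sum_(i < k) d (tnth O i) (tnth S i) + kRP_cost d P O.
Proof.
have [_ _ d_sym d_tri] := d_metric.
have -> : \sum_(i < k) d (tnth O i) (tnth S i) =
    \sum_X pX X * \sum_(i < k) d (tnth O i) (tnth S i).
  by rewrite -mulr_suml sum_pX mul1r.
rewrite /kRP_cost -big_split /=; apply: ler_sum => X _.
rewrite -/(pX X) -mulrDr ler_wpM2l ?pX_ge0 //.
pose s := opt_matching d O X.
have : dk d S X <= \sum_(i < k) d (tnth S i) (tnth X (s i)) by apply: bigmin_le.
move/le_trans; apply.
rewrite dk_opt_matching -big_split /=; apply: ler_sum => i _.
by rewrite [d (tnth O i) _]d_sym; apply: d_tri.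
Qed.

End RelaxedMatching.

(** * The support of the variance-reduced distribution *)

Section MultisetCounts.
Variable T : finType.

Lemma sum_count_mem (s : seq T) : (\sum_y count_mem y s)%N = size s.
Proof.
elim: s => [|x s IHs] /=; first by rewrite big1.
rewrite big_split /= IHs (bigD1 x) //= eqxx big1 // => y.
by rewrite eq_sym => /negbTE ->.
Qed.

Lemma count_flatten_nseq (g : T -> nat) x :
  count_mem x (flatten [seq nseq (g y) y | y <- enum T]) = g x.
Proof.
rewrite count_flatten sumnE !big_map -enumT big_enum /= (bigD1 x) //=.
rewrite count_nseq /= eqxx mul1n big1 ?addn0 // => y y_neq.
by rewrite count_nseq /= (negbTE y_neq).
Qed.

Lemma size_flatten_nseq (g : T -> nat) :
  size (flatten [seq nseq (g y) y | y <- enum T]) = (\sum_y g y)%N.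
Proof.
rewrite size_flatten sumnE /shape !big_map -enumT big_enum /=.
by apply: eq_bigr => y _; rewrite size_nseq.
Qed.

Lemma count_mem_mktuple k (f : 'I_k -> T) x :
  count_mem x [tuple f i | i < k] = load f x.
Proof. by rewrite /= count_map -sumn_count sumnE big_map big_enum. Qed.

End MultisetCounts.

Section PtildeSupport.
Variables (R : realType) (T : finType) (P : T -> R) (k : nat).
Hypotheses (P_distr : is_distr P) (k_gt0 : (0 < k)%N).

Let fl_le x : (fl P k x)%:R <= P x * k%:R.
Proof. by case/andP: (fl_cl_bounds k (proj1 P_distr x)). Qed.

Let resid_ge0 x : 0 <= resid P k x.
Proof. by rewrite subr_ge0 ler_pdivrMr ?ltr0n. Qed.

Let resid_prob_ge0 x : 0 <= resid_prob P k x.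
Proof. by rewrite divr_ge0 ?sumr_ge0. Qed.

Let resid_prob_gt0 x : (fl P k x)%:R != P x * k%:R -> 0 < resid_prob P k x.
Proof.
move=> fl_neq; have resid_gt0 : 0 < resid P k x.
  by rewrite subr_gt0 ltr_pdivrMr ?ltr0n // lt_neqAle fl_neq fl_le.
rewrite divr_gt0 // (bigD1 x) //=; apply: ltr_wpDr resid_gt0.
exact: sumr_ge0.
Qed.

Lemma Ptilde_gt0 (S : k.-tuple T) :
  (forall x, fl P k x <= count_mem x S <= cl P k x)%N -> 0 < Ptilde P S.
Proof.
move=> S_counts.
have fl_count x : (fl P k x <= count_mem x S)%N by case/andP: (S_counts x).
pose e := flatten [seq nseq (count_mem y S - fl P k y) y | y <- enum T].
have size_e : size e == rem_count P k.
  rewrite /e /rem_count /fixed_part !size_flatten_nseq.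
  have count_S : (\sum_y count_mem y S)%N = k by rewrite sum_count_mem size_tuple.
  have : (\sum_y (count_mem y S - fl P k y) + \sum_y fl P k y)%N = k.
    by rewrite -big_split -[RHS]count_S; apply: eq_bigr => y _ /=; rewrite subnK.
  by move=> sum_k; apply/eqP; lia.
pose et := Tuple size_e.
have S_perm : perm_eq (fixed_part P k ++ et) S.
  apply/allP => x _; rewrite /= count_cat /fixed_part !count_flatten_nseq.
  by rewrite subnKC.
have resid_e j : 0 < resid_prob P k (tnth et j).
  apply: resid_prob_gt0.
  have : (0 < count_mem (tnth et j) e)%N by rewrite -has_count has_pred1 mem_tnth.
  rewrite count_flatten_nseq subn_gt0; have := S_counts (tnth et j).
  by rewrite /cl; case: eqP => // _ /andP[_]; rewrite leqNgt => /negbTE->.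
rewrite /Ptilde (bigD1 et) //= S_perm mulr1; apply: ltr_wpDr.
  by apply: sumr_ge0 => e' _; rewrite mulr_ge0 ?ler0n ?prodr_ge0.
by apply: prodr_gt0 => j _; apply: resid_e.
Qed.

End PtildeSupport.

Theorem corollary2 (R : realType) (T : finType) (d : T -> T -> R) (P : T -> R)
    (k : nat) (O : k.-tuple T) :
  is_metric d -> is_distr P -> (1 <= k)%N ->
  (forall S : k.-tuple T, kRP_cost d P O <= kRP_cost d P S) ->
  exists S : k.-tuple T,
    0 < Ptilde P S /\ kRP_cost d P S <= 4 * kRP_cost d P O.
Proof.
move=> d_metric P_distr k_gt0 _.
have [f [load_f match_f]] := exists_rounded_matching d P_distr O.
exists [tuple f i | i < k]; split.
  by apply: Ptilde_gt0 => // x; rewrite count_mem_mktuple.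
apply: le_trans (kRP_cost_triangle P_distr d_metric _ O) _.
under eq_bigr do rewrite tnth_mktuple.
have := kRP_cost_ge0 P_distr d_metric O; lra.
Qed.
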